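(* If a Banach space $X$ has the join-lush property, then $n_L(X)=1$.
   Context: $X$ is a Banach space over $\mathbb{K}=\mathbb{R}$ or $\mathbb{C}$, $\mathbb{T}=\{\alpha\in\mathbb{K}:|\alpha|=1\}$. For $y^*\in S_{X^*}$ and $\varepsilon>0$, $S(y^*,\varepsilon)=\{z\in B_X:\operatorname{Re}y^*(z)>1-\varepsilon\}$. $X$ has the join-lush property if for each $x,y\in S_X$ and $\varepsilon>0$ there exist $y^*\in S_{X^*}$ with $y\in S=S(y^*,\varepsilon)$, $x_1,x_2\in S$, $\lambda\in[0,1]$ and $\alpha_1,\alpha_2\in\mathbb{T}$ such that $\|x-(\lambda\alpha_1x_1+(1-\lambda)\alpha_2x_2)\|<\varepsilon$. $\mathrm{Lip}_0(X)$ is the set of Lipschitz maps $T:X\to X$ with $T(0)=0$, with $\|T\|_L=\sup\{\|Tx-Ty\|/\|x-y\|: x\neq y\}$; $D(x)=\{x^*\in X^*: x^*(x)=\|x^*\|\|x\|=\|x\|^2\}$; $\omega(T)=\sup\{|f(Tx-Ty)|/\|x-y\|^2: x\neq y,\ f\in D(x-y)\}$; $n_L(X)=\inf\{\omega(T): T\in\mathrm{Lip}_0(X),\ \|T\|_L=1\}$. *)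

From Stdlib Require Import Reals Lra.
Open Scope R_scope.

Record Cx := mkC { re : R; im : R }.
Definition RtoC (r : R) : Cx := mkC r 0.
Definition C0 : Cx := RtoC 0.
Definition C1 : Cx := RtoC 1.
Definition Cadd (a b : Cx) : Cx := mkC (re a + re b) (im a + im b).
Definition Cmul (a b : Cx) : Cx :=
  mkC (re a * re b - im a * im b) (re a * im b + im a * re b).
Definition Cabs (a : Cx) : R := sqrt (re a * re a + im a * im a).

Inductive field_kind := RealK | ComplexK.

Definition inK (k : field_kind) (z : Cx) : Prop :=
  match k with RealK => im z = 0 | ComplexK => True end.

Definition inT (k : field_kind) (z : Cx) : Prop := inK k z /\ Cabs z = 1.

(** * Banach spaces over K.  The scalar action is only constrained on
   scalars in K (values on other scalars are irrelevant and never used). *)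
Record Banach (k : field_kind) := {
  vec :> Type;
  vadd : vec -> vec -> vec;
  vzero : vec;
  vopp : vec -> vec;
  scal : Cx -> vec -> vec;
  norm : vec -> R;
  vadd_assoc : forall x y z, vadd x (vadd y z) = vadd (vadd x y) z;
  vadd_comm : forall x y, vadd x y = vadd y x;
  vadd_0 : forall x, vadd x vzero = x;
  vadd_opp : forall x, vadd x (vopp x) = vzero;
  scal_addv : forall a x y, inK k a -> scal a (vadd x y) = vadd (scal a x) (scal a y);
  scal_adds : forall a b x, inK k a -> inK k b ->
     scal (Cadd a b) x = vadd (scal a x) (scal b x);
  scal_mul : forall a b x, inK k a -> inK k b -> scal (Cmul a b) x = scal a (scal b x);
  scal_1 : forall x, scal C1 x = x;
  norm_nonneg : forall x, 0 <= norm x;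
  norm_eq0 : forall x, norm x = 0 -> x = vzero;
  norm_scal : forall a x, inK k a -> norm (scal a x) = Cabs a * norm x;
  norm_triangle : forall x y, norm (vadd x y) <= norm x + norm y;
  complete : forall u : nat -> vec,
     (forall eps, 0 < eps -> exists N, forall n m, (N <= n)%nat -> (N <= m)%nat ->
         norm (vadd (u n) (vopp (u m))) < eps) ->
     exists l, forall eps, 0 < eps -> exists N, forall n, (N <= n)%nat ->
         norm (vadd (u n) (vopp l)) < eps
}.

Arguments vadd {k X} : rename.
Arguments vzero {k} X : rename.
Arguments vopp {k X} : rename.
Arguments scal {k X} : rename.
Arguments norm {k X} : rename.

Section Defs.
Context {k : field_kind} {X : Banach k}.

Definition vsub (x y : X) : X := vadd x (vopp y).

Definition inSX (x : X) : Prop := norm x = 1.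

Definition is_dual (f : X -> Cx) : Prop :=
  (forall x, inK k (f x)) /\
  (forall x y, f (vadd x y) = Cadd (f x) (f y)) /\
  (forall a x, inK k a -> f (scal a x) = Cmul a (f x)) /\
  (exists M, forall x, Cabs (f x) <= M * norm x).

Definition dual_norm (f : X -> Cx) (c : R) : Prop :=
  is_lub (fun r => exists x : X, norm x <= 1 /\ r = Cabs (f x)) c.

Definition inSXs (f : X -> Cx) : Prop := is_dual f /\ dual_norm f 1.

Definition inSlice (f : X -> Cx) (eps : R) (z : X) : Prop :=
  norm z <= 1 /\ re (f z) > 1 - eps.

Definition join_lush : Prop :=
  forall x y : X, inSX x -> inSX y -> forall eps, 0 < eps ->
  exists ys : X -> Cx, inSXs ys /\ inSlice ys eps y /\
  exists (x1 x2 : X) (lam : R) (a1 a2 : Cx),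
    inSlice ys eps x1 /\ inSlice ys eps x2 /\ 0 <= lam <= 1 /\
    inT k a1 /\ inT k a2 /\
    norm (vsub x (vadd (scal (RtoC lam) (scal a1 x1))
                       (scal (RtoC (1 - lam)) (scal a2 x2)))) < eps.

Definition inD (x : X) (f : X -> Cx) : Prop :=
  is_dual f /\ exists c, dual_norm f c /\
    f x = RtoC (c * norm x) /\ c * norm x = norm x ^ 2.

Definition lip_norm (T : X -> X) (L : R) : Prop :=
  is_lub (fun r => exists x y : X, x <> y /\
            r = norm (vsub (T x) (T y)) / norm (vsub x y)) L.

Definition omega (T : X -> X) (w : R) : Prop :=
  is_lub (fun r => exists (x y : X) (f : X -> Cx), x <> y /\ inD (vsub x y) f /\
            r = Cabs (f (vsub (T x) (T y))) / (norm (vsub x y)) ^ 2) w.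

Definition is_lower_bound (E : R -> Prop) (m : R) : Prop := forall x, E x -> m <= x.
Definition is_glb (E : R -> Prop) (m : R) : Prop :=
  is_lower_bound E m /\ forall b, is_lower_bound E b -> b <= m.

Definition nL (v : R) : Prop :=
  is_glb (fun w => exists T : X -> X, T (vzero X) = vzero X /\ lip_norm T 1 /\ omega T w) v.

End Defs.
Arguments join_lush {k} X.
Arguments nL {k} X v.

From Stdlib Require Import Reals.
Open Scope R_scope.
From Stdlib Require Import Lra Psatz ClassicalEpsilon Classical.
From mathcomp Require boolp classical_sets.

(** Upper bound: the identity has [||Id||_L = 1] and [omega(Id) = 1]; the latter only
   needs one support functional at a unit vector, which Hahn–Banach provides.

   Lower bound: let [||T||_L = 1] and take [u <> v] with [||Tu - Tv||] close to
   [||u - v|| = r].  Join-lushness applied to [x = (u-v)/r] and [y = (Tu-Tv)/||Tu-Tv||]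
   gives a slice [S(y*, eps)] containing [y] with [x ~ lam a1 x1 + (1-lam) a2 x2], [xi] in
   the slice.  The polygon [v, v + r lam a1 x1, ... ~ u] has two sides, and along one of
   them, of length [s] and direction [a z0] with [z0] in the slice, the real functional
   [psi = Re (conj a . y* )] sees [T] increase by at least [s (1 - 6 eps)].  The
   Bishop–Phelps–Bollobás theorem for [psi] moves [z0] to a unit vector [x0] carrying a
   norm-one support functional [h] uniformly close to [psi]; the pair [a + s x0, a] with
   the complexification of [s h] lies in [D] and shows [omega(T) >= 1 - O(eps)]. *)

Arguments vadd_assoc {k b0}. Arguments vadd_comm {k b0}. Arguments vadd_0 {k b0}.
Arguments vadd_opp {k b0}. Arguments scal_addv {k b0}. Arguments scal_adds {k b0}.
Arguments scal_mul {k b0}. Arguments scal_1 {k b0}. Arguments norm_nonneg {k b0}.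
Arguments norm_eq0 {k b0}. Arguments norm_scal {k b0}. Arguments norm_triangle {k b0}.
Arguments complete {k b0}.

Lemma mkC_eq a b c d : a = c -> b = d -> mkC a b = mkC c d.
Proof. intros; subst; reflexivity. Qed.

Lemma inK_RtoC k r : inK k (RtoC r).
Proof. destruct k; simpl; auto. Qed.

Section Vec.
Context {k : field_kind} {X : Banach k}.

Definition sc (r : R) (x : X) : X := scal (RtoC r) x.

Lemma vadd_0l (x : X) : vadd (vzero X) x = x.
Proof. rewrite vadd_comm. apply vadd_0. Qed.

Lemma vadd_oppl (x : X) : vadd (vopp x) x = vzero X.
Proof. rewrite vadd_comm. apply vadd_opp. Qed.

Lemma vadd_cancel (a x y : X) : vadd a x = vadd a y -> x = y.
Proof.
  intro H. assert (E : vadd (vopp a) (vadd a x) = vadd (vopp a) (vadd a y)) by now rewrite H.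
  now rewrite !vadd_assoc, vadd_oppl, !vadd_0l in E.
Qed.

Lemma vopp_unique (x y : X) : vadd x y = vzero X -> y = vopp x.
Proof. intro H. apply (vadd_cancel x). now rewrite H, vadd_opp. Qed.

Lemma vopp_opp (x : X) : vopp (vopp x) = x.
Proof. symmetry. apply vopp_unique, vadd_oppl. Qed.

Lemma vopp_add (x y : X) : vopp (vadd x y) = vadd (vopp x) (vopp y).
Proof.
  symmetry. apply vopp_unique.
  now rewrite (vadd_comm (vopp x)), vadd_assoc, <- (vadd_assoc x), vadd_opp, vadd_0, vadd_opp.
Qed.

Lemma vopp_zero : vopp (vzero X) = vzero X.
Proof. symmetry. apply vopp_unique, vadd_0. Qed.

Lemma sc_add r s (x : X) : sc (r + s) x = vadd (sc r x) (sc s x).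
Proof.
  unfold sc. rewrite <- scal_adds by apply inK_RtoC. f_equal.
  unfold Cadd, RtoC; simpl. apply mkC_eq; ring.
Qed.

Lemma sc_mul r s (x : X) : sc r (sc s x) = sc (r * s) x.
Proof.
  unfold sc. rewrite <- scal_mul by apply inK_RtoC. f_equal.
  unfold Cmul, RtoC; simpl. apply mkC_eq; ring.
Qed.

Lemma sc_1 (x : X) : sc 1 x = x.
Proof. apply scal_1. Qed.

Lemma sc_0 (x : X) : sc 0 x = vzero X.
Proof. apply (vadd_cancel (sc 0 x)). rewrite <- sc_add, vadd_0. f_equal. ring. Qed.

Lemma sc_addv r (x y : X) : sc r (vadd x y) = vadd (sc r x) (sc r y).
Proof. apply scal_addv, inK_RtoC. Qed.

Lemma sc_zero r : sc r (vzero X) = vzero X.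
Proof. apply (vadd_cancel (sc r (vzero X))). now rewrite <- sc_addv, !vadd_0. Qed.

Lemma sc_opp r (x : X) : sc (- r) x = vopp (sc r x).
Proof. apply vopp_unique. rewrite <- sc_add. replace (r + - r) with 0 by ring. apply sc_0. Qed.

Lemma sc_oppv r (x : X) : sc r (vopp x) = vopp (sc r x).
Proof. apply vopp_unique. rewrite <- sc_addv, vadd_opp. apply sc_zero. Qed.

Lemma vopp_sc (x : X) : vopp x = sc (-1) x.
Proof. replace (-1) with (- (1)) by ring. now rewrite sc_opp, sc_1. Qed.

Lemma Cabs_RtoC r : Cabs (RtoC r) = Rabs r.
Proof.
  unfold Cabs, RtoC; simpl. replace (r * r + 0 * 0) with (Rsqr r) by (unfold Rsqr; ring).
  apply sqrt_Rsqr_abs.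
Qed.

Lemma norm_sc r (x : X) : norm (sc r x) = Rabs r * norm x.
Proof. unfold sc. now rewrite norm_scal, Cabs_RtoC by apply inK_RtoC. Qed.

Lemma norm_zero : norm (vzero X) = 0.
Proof. rewrite <- (sc_0 (vzero X)), norm_sc, Rabs_R0. ring. Qed.

Lemma norm_opp (x : X) : norm (vopp x) = norm x.
Proof. rewrite vopp_sc, norm_sc. replace (-1) with (- (1)) by ring. rewrite Rabs_Ropp, Rabs_R1. ring. Qed.

Lemma norm_pos (x : X) : x <> vzero X -> 0 < norm x.
Proof. intro H. destruct (norm_nonneg x); auto. exfalso. now apply H, norm_eq0. Qed.

Lemma vsub_self (x : X) : vsub x x = vzero X.
Proof. apply vadd_opp. Qed.

Lemma vsub_0 (x : X) : vsub x (vzero X) = x.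
Proof. unfold vsub. rewrite vopp_zero. apply vadd_0. Qed.

Lemma vsub_eq0 (x y : X) : vsub x y = vzero X -> x = y.
Proof. unfold vsub. intro H. apply vopp_unique in H. now rewrite <- (vopp_opp x), <- H, vopp_opp. Qed.

Lemma vsub_neq0 (x y : X) : x <> y -> vsub x y <> vzero X.
Proof. intros H E. now apply H, vsub_eq0. Qed.

Lemma vsub_addl (a w : X) : vsub (vadd a w) a = w.
Proof. unfold vsub. now rewrite (vadd_comm a), <- vadd_assoc, vadd_opp, vadd_0. Qed.

Lemma vadd_sub (a w : X) : vadd a (vsub w a) = w.
Proof. unfold vsub. now rewrite (vadd_comm w), vadd_assoc, vadd_opp, vadd_0l. Qed.

Lemma vsub_chain (a b c : X) : vsub c a = vadd (vsub c b) (vsub b a).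
Proof. unfold vsub. now rewrite <- vadd_assoc, (vadd_assoc (vopp b)), vadd_oppl, vadd_0l. Qed.

Lemma vsub_addcancel (v a b : X) : vsub (vadd v a) (vadd v b) = vsub a b.
Proof.
  unfold vsub. rewrite vopp_add, (vadd_comm v a), <- vadd_assoc, (vadd_assoc v), vadd_opp.
  now rewrite vadd_0l.
Qed.

Lemma vsub_opp (x y : X) : vopp (vsub x y) = vsub y x.
Proof. unfold vsub. now rewrite vopp_add, vopp_opp, vadd_comm. Qed.

Lemma norm_sub_sym (x y : X) : norm (vsub x y) = norm (vsub y x).
Proof. now rewrite <- vsub_opp, norm_opp. Qed.

Lemma sc_sub r (x y : X) : sc r (vsub x y) = vsub (sc r x) (sc r y).
Proof. unfold vsub. now rewrite sc_addv, sc_oppv. Qed.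

Lemma norm_tri_sub (x y z : X) : norm (vsub x z) <= norm (vsub x y) + norm (vsub y z).
Proof. rewrite (vsub_chain z y x). apply norm_triangle. Qed.

Lemma norm_sub_le (a b : X) : norm (vsub a b) <= norm a + norm b.
Proof. unfold vsub. rewrite <- (norm_opp b). apply norm_triangle. Qed.

End Vec.

Lemma Rdiv_nonneg a b : 0 <= a -> 0 < b -> 0 <= a / b.
Proof. intros. unfold Rdiv. apply Rmult_le_pos; auto. left. now apply Rinv_0_lt_compat. Qed.

Lemma glb_exists (E : R -> Prop) : (exists e, E e) -> (exists b, is_lower_bound E b) ->
  exists m, is_glb E m.
Proof.
  intros [e He] [b Hb].
  destruct (completeness (fun r => E (- r))) as [l [Hl1 Hl2]].
  - exists (- b). intros r Hr. apply Hb in Hr. lra.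
  - exists (- e). now rewrite Ropp_involutive.
  - exists (- l). split.
    + intros e' He'. assert (- e' <= l) by (apply Hl1; now rewrite Ropp_involutive). lra.
    + intros b' Hb'. assert (l <= - b') by (apply Hl2; intros r Hr; apply Hb' in Hr; lra). lra.
Qed.

Definition Rinf (E : R -> Prop) : R :=
  match excluded_middle_informative (exists m, is_glb E m) with
  | left H => proj1_sig (constructive_indefinite_description _ H)
  | right _ => 0 end.

Lemma Rinf_spec E : (exists e, E e) -> (exists b, is_lower_bound E b) -> is_glb E (Rinf E).
Proof.
  intros H1 H2. unfold Rinf.
  destruct (excluded_middle_informative _) as [H|H].
  - apply (proj2_sig (constructive_indefinite_description _ H)).
  - exfalso. now apply H, glb_exists.
Qed.

(** ** Zorn's lemma for preorders on a nonempty type, with [Prop]-valued relation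
   (the library version is stated for boolean relations). *)
Lemma zorn_preorder (T : Type) (t0 : T) (Rl : T -> T -> Prop) :
  (forall t, Rl t t) -> (forall r s t, Rl r s -> Rl s t -> Rl r t) ->
  (forall A : T -> Prop, (forall s t, A s -> A t -> Rl s t \/ Rl t s) ->
      exists t, forall s, A s -> Rl s t) ->
  exists t, forall s, Rl t s -> Rl s t.
Proof.
  intros Hr Ht Hc.
  set (Rb := fun s t => boolp.asbool (Rl s t)).
  assert (RbP : forall s t, Rb s t = true <-> Rl s t) by (intros; symmetry; apply Bool.reflect_iff, boolp.asboolP).
  destruct (@classical_sets.ZL_preorder T t0 Rb) as [z Hz].
  - intro t. now apply RbP.
  - intros r s t H1 H2. apply RbP in H1, H2. apply RbP. eauto.
  - intros A HA. destruct (Hc A) as [t Hts].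
    + intros s t As At. destruct (HA s t As At) as [H|H]; apply RbP in H; auto.
    + exists t. intros s As. now apply RbP, Hts.
  - exists z. intros s H. apply RbP, Hz, RbP, H.
Qed.
(** ** Sublinear functionals and the Hahn–Banach theorem. *)
Section HahnBanach.
Context {k : field_kind} {X : Banach k}.

Record rlinear (f : X -> R) : Prop := {
  rl_add : forall x y, f (vadd x y) = f x + f y;
  rl_sc : forall r x, f (sc r x) = r * f x }.

Definition sublin (p : X -> R) : Prop :=
  (forall x y, p (vadd x y) <= p x + p y) /\ (forall r x, 0 <= r -> p (sc r x) = r * p x).

Lemma sublin_0 p : sublin p -> p (vzero X) = 0.
Proof. intros [_ H]. rewrite <- (sc_0 (vzero X)), H by lra. ring. Qed.

Lemma sublin_opp p x : sublin p -> - p (vopp x) <= p x.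
Proof.
  intros Hp. pose proof (sublin_0 p Hp). pose proof (proj1 Hp x (vopp x)).
  rewrite vadd_opp in *. lra.
Qed.

Lemma norm_sublin : sublin (@norm k X).
Proof. split. apply norm_triangle. intros r x Hr. now rewrite norm_sc, Rabs_pos_eq. Qed.

Section ConeInfimum.
Variables (p : X -> R) (C : X -> Prop) (l : X -> R).
Hypotheses (Hp : sublin p) (C0 : C (vzero X))
  (Cadd : forall a b, C a -> C b -> C (vadd a b))
  (Csc : forall r a, 0 <= r -> C a -> C (sc r a))
  (ladd : forall a b, C a -> C b -> l (vadd a b) = l a + l b)
  (lsc : forall r a, 0 <= r -> C a -> l (sc r a) = r * l a)
  (lp : forall a, C a -> l a <= p a).

Lemma cone_l0 : l (vzero X) = 0.
Proof. rewrite <- (sc_0 (vzero X)), lsc by (auto; lra). ring. Qed.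

Definition qinf (w : X) : R := Rinf (fun e => exists c, C c /\ e = p (vadd w c) - l c).

Lemma qinf_spec w : is_glb (fun e => exists c, C c /\ e = p (vadd w c) - l c) (qinf w).
Proof.
  apply Rinf_spec; [now exists (p (vadd w (vzero X)) - l (vzero X)), (vzero X)|].
  exists (- p (vopp w)). intros e [c [Hc ->]].
  pose proof (lp c Hc). pose proof (proj1 Hp (vadd w c) (vopp w)).
  rewrite (vadd_comm w), <- vadd_assoc, vadd_opp, vadd_0 in *. lra.
Qed.

Lemma qinf_le w c : C c -> qinf w <= p (vadd w c) - l c.
Proof. intro Hc. apply (proj1 (qinf_spec w)). eauto. Qed.

Lemma qinf_ge w : - p (vopp w) <= qinf w.
Proof.
  apply (proj2 (qinf_spec w)). intros e [c [Hc ->]].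
  pose proof (lp c Hc). pose proof (proj1 Hp (vadd w c) (vopp w)).
  rewrite (vadd_comm w), <- vadd_assoc, vadd_opp, vadd_0 in *. lra.
Qed.

Lemma qinf_lep w : qinf w <= p w.
Proof.
  pose proof (qinf_le w _ C0). rewrite vadd_0, cone_l0 in H. lra.
Qed.

Lemma qinf_opp c : C c -> qinf (vopp c) <= - l c.
Proof.
  intro Hc. pose proof (qinf_le (vopp c) c Hc). rewrite vadd_oppl, (sublin_0 p Hp) in H. lra.
Qed.

Lemma qinf_subadd w1 w2 : qinf (vadd w1 w2) <= qinf w1 + qinf w2.
Proof.
  assert (H : forall c2, C c2 -> qinf (vadd w1 w2) - (p (vadd w2 c2) - l c2) <= qinf w1).
  { intros c2 Hc2. apply (proj2 (qinf_spec w1)). intros e [c1 [Hc1 ->]].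
    pose proof (qinf_le (vadd w1 w2) (vadd c1 c2) (Cadd _ _ Hc1 Hc2)) as Hq.
    replace (vadd (vadd w1 w2) (vadd c1 c2)) with (vadd (vadd w1 c1) (vadd w2 c2)) in Hq
      by (rewrite <- !vadd_assoc; f_equal; rewrite !vadd_assoc; f_equal; apply vadd_comm).
    rewrite ladd in Hq by auto. pose proof (proj1 Hp (vadd w1 c1) (vadd w2 c2)). lra. }
  assert (qinf (vadd w1 w2) - qinf w1 <= qinf w2).
  { apply (proj2 (qinf_spec w2)). intros e [c2 [Hc2 ->]]. pose proof (H c2 Hc2). lra. }
  lra.
Qed.

Lemma qinf_homog r w : 0 < r -> qinf (sc r w) = r * qinf w.
Proof.
  intro Hr. assert (Hr' : 0 <= / r) by (left; now apply Rinv_0_lt_compat).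
  apply Rle_antisym.
  - assert (qinf (sc r w) / r <= qinf w); [|apply (Rmult_le_compat_l r) in H; [|lra];
      field_simplify in H; lra].
    apply (proj2 (qinf_spec w)). intros e [c [Hc ->]].
    pose proof (qinf_le (sc r w) (sc r c) (Csc r c (Rlt_le _ _ Hr) Hc)) as Hq.
    rewrite <- sc_addv, (proj2 Hp), lsc in Hq by (auto; lra).
    apply (Rmult_le_reg_l r); auto. field_simplify; lra.
  - assert (qinf w <= qinf (sc r w) / r); [|apply (Rmult_le_compat_l r) in H; [|lra];
      field_simplify in H; lra].
    apply (Rmult_le_reg_l r); auto. field_simplify; [|lra].
    apply (proj2 (qinf_spec (sc r w))). intros e [c [Hc ->]].
    pose proof (qinf_le w _ (Csc _ _ Hr' Hc)) as Hq.
    replace (vadd (sc r w) c) with (sc r (vadd w (sc (/ r) c))) by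
      (rewrite sc_addv, sc_mul, Rinv_r, sc_1 by lra; auto).
    rewrite (proj2 Hp) by lra. rewrite lsc in Hq by auto.
    replace (l c) with (r * (/ r * l c)) by (field; lra). nra.
Qed.

Lemma qinf_sublin : sublin qinf.
Proof.
  split; [apply qinf_subadd|]. intros r w [Hr|<-]; [now apply qinf_homog|].
  rewrite sc_0. pose proof (qinf_lep (vzero X)). pose proof (qinf_ge (vzero X)).
  rewrite vopp_zero, (sublin_0 p Hp) in *. lra.
Qed.

End ConeInfimum.

Definition ray (y w : X) : Prop := exists t, 0 <= t /\ w = sc t y.

Lemma ray_cone_props (q : X -> R) (y : X) : sublin q ->
  ray y (vzero X) /\ (forall a b, ray y a -> ray y b -> ray y (vadd a b)) /\
  (forall r a, 0 <= r -> ray y a -> ray y (sc r a)) /\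
  (forall a b, ray y a -> ray y b -> q (vadd a b) = q a + q b) /\
  (forall r a, 0 <= r -> ray y a -> q (sc r a) = r * q a).
Proof.
  intros Hq. repeat split.
  - exists 0. rewrite sc_0. split; auto; lra.
  - intros a b [t [Ht ->]] [t' [Ht' ->]]. exists (t + t'). rewrite sc_add. split; auto; lra.
  - intros r a Hr [t [Ht ->]]. exists (r * t). rewrite sc_mul. split; auto. nra.
  - intros a b [t [Ht ->]] [t' [Ht' ->]]. rewrite <- sc_add, !(proj2 Hq) by lra. ring.
  - intros r a Hr _. now apply (proj2 Hq).
Qed.

Definition ray_reduce (q : X -> R) (y : X) : X -> R := qinf q (ray y) q.

Lemma ray_reduce_spec q y : sublin q ->
  sublin (ray_reduce q y) /\ (forall w, ray_reduce q y w <= q w) /\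
  ray_reduce q y (vopp y) <= - q y.
Proof.
  intro Hq. destruct (ray_cone_props q y Hq) as [R0 [R1 [R2 [R3 R4]]]].
  assert (Rle : forall a, ray y a -> q a <= q a) by (intros; lra).
  split; [|split].
  - now apply qinf_sublin.
  - intro w. now apply qinf_lep.
  - apply qinf_opp; auto. exists 1. rewrite sc_1. split; auto; lra.
Qed.

(** The pointwise infimum of a nonempty chain of sublinear functionals below a
   sublinear [p] is again sublinear: chains have lower bounds in Zorn's lemma. *)
Section ChainInfimum.
Variable p : X -> R.
Variable F : (X -> R) -> Prop.
Hypotheses (Fne : exists q, F q) (Fsub : forall q, F q -> sublin q /\ forall x, q x <= p x)
  (Ftot : forall q1 q2, F q1 -> F q2 -> (forall x, q1 x <= q2 x) \/ (forall x, q2 x <= q1 x)).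

Definition chain_inf (x : X) : R := Rinf (fun e => exists q, F q /\ e = q x).

Lemma chain_inf_spec x : is_glb (fun e => exists q, F q /\ e = q x) (chain_inf x).
Proof.
  apply Rinf_spec; [destruct Fne as [q Hq]; eauto|].
  exists (- p (vopp x)). intros e [q [Hq ->]]. destruct (Fsub q Hq) as [Hs Hle].
  pose proof (sublin_opp q x Hs). pose proof (Hle (vopp x)). lra.
Qed.

Lemma chain_inf_le q x : F q -> chain_inf x <= q x.
Proof. intro Hq. apply (proj1 (chain_inf_spec x)). eauto. Qed.

Lemma chain_inf_subadd x y : chain_inf (vadd x y) <= chain_inf x + chain_inf y.
Proof.
  assert (H : forall q2, F q2 -> chain_inf (vadd x y) - q2 y <= chain_inf x).
  { intros q2 F2. apply (proj2 (chain_inf_spec x)). intros e [q1 [F1 ->]].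
    destruct (Ftot q1 q2 F1 F2) as [H|H].
    - pose proof (chain_inf_le q1 (vadd x y) F1). pose proof (proj1 (proj1 (Fsub q1 F1)) x y).
      specialize (H y). lra.
    - pose proof (chain_inf_le q2 (vadd x y) F2). pose proof (proj1 (proj1 (Fsub q2 F2)) x y).
      specialize (H x). lra. }
  assert (chain_inf (vadd x y) - chain_inf x <= chain_inf y).
  { apply (proj2 (chain_inf_spec y)). intros e [q2 [F2 ->]]. pose proof (H q2 F2). lra. }
  lra.
Qed.

Lemma chain_inf_homog r x : 0 <= r -> chain_inf (sc r x) = r * chain_inf x.
Proof.
  intro Hr. apply Rle_antisym.
  - destruct Hr as [Hr|<-].
    + assert (chain_inf (sc r x) / r <= chain_inf x).
      { apply (proj2 (chain_inf_spec x)). intros e [q [Fq ->]].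
        pose proof (chain_inf_le q (sc r x) Fq). rewrite (proj2 (proj1 (Fsub q Fq))) in H by lra.
        apply (Rmult_le_reg_l r); [lra|]. field_simplify; lra. }
      apply (Rmult_le_compat_l r) in H; [|lra]. field_simplify in H; lra.
    + destruct Fne as [q Fq]. pose proof (chain_inf_le q (sc 0 x) Fq).
      rewrite sc_0, (sublin_0 q (proj1 (Fsub q Fq))) in *. lra.
  - apply (proj2 (chain_inf_spec (sc r x))). intros e [q [Fq ->]].
    rewrite (proj2 (proj1 (Fsub q Fq))) by lra.
    pose proof (chain_inf_le q x Fq). nra.
Qed.

Lemma chain_inf_sublin : sublin chain_inf.
Proof. split; [apply chain_inf_subadd|apply chain_inf_homog]. Qed.

End ChainInfimum.

Lemma odd_sublin_linear q : sublin q -> (forall y, q (vopp y) = - q y) -> rlinear q.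
Proof.
  intros Hq Hodd. split.
  - intros x y. apply Rle_antisym; [apply (proj1 Hq)|].
    pose proof (proj1 Hq (vopp x) (vopp y)). rewrite <- vopp_add, !Hodd in H. lra.
  - intros r x. destruct (Rle_dec 0 r); [now apply (proj2 Hq)|].
    replace r with (- (- r)) by ring. rewrite sc_opp, Hodd, (proj2 Hq) by lra. ring.
Qed.

Lemma minimal_sublin_linear q : sublin q ->
  (forall q', sublin q' -> (forall x, q' x <= q x) -> forall x, q x <= q' x) -> rlinear q.
Proof.
  intros Hq Hmin. apply odd_sublin_linear; auto. intro y.
  destruct (ray_reduce_spec q y Hq) as [Hs [Hle Hopp]].
  pose proof (Hmin _ Hs Hle (vopp y)). pose proof (sublin_opp q y Hq). lra.
Qed.

(** Hahn–Banach: a linear functional below [p] attaining [p] at [x0].  By Zorn, take a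
   minimal sublinear [q <= p] with [q (-x0) <= - p x0]; it is linear. *)
Theorem hahn_banach (p : X -> R) (x0 : X) : sublin p ->
  exists f : X -> R, rlinear f /\ (forall x, f x <= p x) /\ f x0 = p x0.
Proof.
  intros Hp.
  set (P := fun q : X -> R => sublin q /\ (forall x, q x <= p x) /\ q (vopp x0) <= - p x0).
  destruct (ray_reduce_spec p x0 Hp) as [Hs0 [Hle0 Hopp0]].
  set (t0 := exist P (ray_reduce p x0) (conj Hs0 (conj Hle0 Hopp0))).
  set (Rl := fun s t : {q | P q} => forall x, proj1_sig t x <= proj1_sig s x).
  destruct (zorn_preorder _ t0 Rl) as [[q [Hq [Hqp Hqx]]] Hmax].
  - intros t x. lra.
  - intros r s t H1 H2 x. specialize (H1 x). specialize (H2 x). lra.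
  - intros A HA. destruct (classic (exists s, A s)) as [[[q0 Pq0] As0]|Hne].
    2:{ exists t0. intros s As. exfalso. eauto. }
    set (F := fun q => exists s, A s /\ proj1_sig s = q).
    assert (F0 : F q0) by (exists (exist P q0 Pq0); auto).
    assert (Fne : exists q, F q) by eauto.
    assert (Fsub : forall q, F q -> sublin q /\ forall x, q x <= p x)
      by (intros q [[q' Pq'] [_ <-]]; simpl; pose proof Pq' as [? [? _]]; auto).
    assert (Ftot : forall q1 q2, F q1 -> F q2 ->
              (forall x, q1 x <= q2 x) \/ (forall x, q2 x <= q1 x))
      by (intros q1 q2 [s1 [A1 <-]] [s2 [A2 <-]]; destruct (HA s1 s2 A1 A2); auto).
    assert (Pm : P (chain_inf F)).
    { pose proof Pq0 as [_ [Hle Hopp]]. split; [now apply (chain_inf_sublin p)|split].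
      - intro x. pose proof (chain_inf_le p F Fne Fsub q0 x F0). specialize (Hle x). lra.
      - pose proof (chain_inf_le p F Fne Fsub q0 (vopp x0) F0). lra. }
    exists (exist P _ Pm). intros s As x. now apply (chain_inf_le p); [| |exists s].
  - assert (Hlin : rlinear q).
    { apply minimal_sublin_linear; auto. intros q' Hq' Hle.
      assert (Pq' : P q').
      { split; auto. split; [intro x; specialize (Hle x); pose proof (Hqp x); lra|].
        specialize (Hle (vopp x0)). lra. }
      exact (Hmax (exist P q' Pq') Hle). }
    exists q. split; auto. split; auto.
    assert (q (vopp x0) = - q x0) by (rewrite vopp_sc, (rl_sc _ Hlin); ring).
    pose proof (Hqp x0). lra.
Qed.

End HahnBanach.
Section RealDual.
Context {k : field_kind} {X : Banach k}.

Definition rdual1 (f : X -> R) : Prop := rlinear f /\ forall w, f w <= norm w.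

Lemma rlinear_opp (f : X -> R) x : rlinear f -> f (vopp x) = - f x.
Proof. intro Hf. rewrite vopp_sc, (rl_sc _ Hf). ring. Qed.

Lemma rlinear_sub (f : X -> R) x y : rlinear f -> f (vsub x y) = f x - f y.
Proof. intro Hf. unfold vsub. rewrite (rl_add _ Hf), rlinear_opp by auto. ring. Qed.

Lemma rlinear_0 (f : X -> R) : rlinear f -> f (vzero X) = 0.
Proof. intro Hf. rewrite <- (sc_0 (vzero X)), (rl_sc _ Hf). ring. Qed.

Lemma rdual1_abs (f : X -> R) w : rdual1 f -> Rabs (f w) <= norm w.
Proof.
  intros [Hf Hb]. pose proof (Hb w). pose proof (Hb (vopp w)).
  rewrite rlinear_opp, norm_opp in * by auto. unfold Rabs; destruct Rcase_abs; lra.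
Qed.

Lemma rdual1_ge (f : X -> R) w : rdual1 f -> - norm w <= f w.
Proof. intro Hf. pose proof (rdual1_abs f w Hf). pose proof (Rle_abs (- f w)). rewrite Rabs_Ropp in *. lra. Qed.

End RealDual.

Definition Ci : Cx := mkC 0 1.
Definition conjC (a : Cx) : Cx := mkC (re a) (- im a).

Lemma Cx_eta (z : Cx) : z = mkC (re z) (im z).
Proof. now destruct z. Qed.

Lemma Cabs_nonneg z : 0 <= Cabs z.
Proof. apply sqrt_pos. Qed.

Lemma Cabs_sq z : Cabs z * Cabs z = re z * re z + im z * im z.
Proof. unfold Cabs. apply sqrt_sqrt. nra. Qed.

Lemma re_le_Cabs z : Rabs (re z) <= Cabs z.
Proof. pose proof (Cabs_sq z). pose proof (Cabs_nonneg z). unfold Rabs; destruct Rcase_abs; nra. Qed.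

Lemma re_le_Cabs' z : re z <= Cabs z.
Proof. pose proof (re_le_Cabs z). pose proof (Rle_abs (re z)). lra. Qed.

Lemma Cabs_mul a b : Cabs (Cmul a b) = Cabs a * Cabs b.
Proof. unfold Cabs, Cmul; simpl. rewrite <- sqrt_mult by nra. f_equal. ring. Qed.

Lemma Cabs_conj a : Cabs (conjC a) = Cabs a.
Proof. unfold Cabs, conjC; simpl. f_equal. ring. Qed.

Lemma Cabs_le_re_im0 z : Cabs z <= re z -> im z = 0.
Proof. intro H. pose proof (Cabs_sq z). pose proof (Cabs_nonneg z). nra. Qed.

Lemma inK_mulR k s z : inK k z -> inK k (Cmul (RtoC s) z).
Proof. destruct k; simpl; auto. intro H; rewrite H; ring. Qed.

(** Case analysis on the scalar field, usable when types depend on it. *)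
Definition isC (k : field_kind) : bool := match k with RealK => false | ComplexK => true end.

Lemma isC_inK k a : isC k = true -> inK k a.
Proof. destruct k; simpl; easy. Qed.

Lemma isC_real_inK k a : isC k = false -> im a = 0 -> inK k a.
Proof. destruct k; simpl; easy. Qed.

Lemma isC_real k a : isC k = false -> inK k a -> a = RtoC (re a).
Proof. destruct k; simpl; intros; try discriminate. now rewrite (Cx_eta a), H0 at 1. Qed.

(** ** Complexification: a real-linear [h <= norm] yields a K-linear functional
   [w |-> h w - i h (i w)] of norm at most one with real part [h]. *)
Section Complexify.
Context {k : field_kind} {X : Banach k}.
Variable h : X -> R.
Hypothesis Hh : rdual1 h.

Definition cplx (w : X) : Cx :=
  if isC k then mkC (h w) (- h (scal Ci w)) else RtoC (h w).

Lemma cplx_re w : re (cplx w) = h w.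
Proof. unfold cplx. now destruct (isC k). Qed.

Lemma cplx_inK w : inK k (cplx w).
Proof. unfold cplx. destruct (isC k) eqn:Hk; [now apply isC_inK|apply inK_RtoC]. Qed.

Lemma cplx_add x y : cplx (vadd x y) = Cadd (cplx x) (cplx y).
Proof.
  destruct Hh as [Hl _]. unfold cplx, Cadd. destruct (isC k) eqn:Hk; simpl.
  - rewrite scal_addv by now apply isC_inK. rewrite !(rl_add _ Hl). apply mkC_eq; ring.
  - rewrite (rl_add _ Hl). apply mkC_eq; ring.
Qed.

Lemma scal_decomp (a : Cx) (w : X) : isC k = true ->
  scal a w = vadd (sc (re a) w) (sc (im a) (scal Ci w)).
Proof.
  intro Hk. unfold sc. assert (HK : forall z, inK k z) by (intro; now apply isC_inK).
  rewrite <- scal_mul, <- scal_adds by auto.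
  f_equal. rewrite (Cx_eta a) at 1. unfold Cadd, Cmul, RtoC, Ci; simpl. apply mkC_eq; ring.
Qed.

Lemma cplx_scal a x : inK k a -> cplx (scal a x) = Cmul a (cplx x).
Proof.
  destruct Hh as [Hl _]. intro Ha. unfold cplx. destruct (isC k) eqn:Hk.
  - rewrite <- (scal_mul Ci a) by now apply isC_inK.
    rewrite (scal_decomp a x), (scal_decomp (Cmul Ci a) x) by auto.
    rewrite !(rl_add _ Hl), !(rl_sc _ Hl). unfold Cmul, Ci; simpl. apply mkC_eq; ring.
  - rewrite (isC_real k a Hk Ha). change (scal (RtoC (re a)) x) with (sc (re a) x).
    rewrite (rl_sc _ Hl). unfold Cmul, RtoC; simpl. apply mkC_eq; ring.
Qed.

(** Rotating [w] by the unit scalar [conj z / |z|], [z = cplx w], makes [cplx] real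
   and equal to [|z|], so [|z| = h (a w) <= ||w||]. *)
Lemma cplx_bound w : Cabs (cplx w) <= norm w.
Proof.
  set (z := cplx w). set (n := Cabs z).
  destruct (Cabs_nonneg z) as [Hn|H0]; [|fold n in H0; rewrite <- H0; apply norm_nonneg].
  fold n in Hn. set (a := mkC (re z / n) (- im z / n)).
  assert (Hsq : re z * re z + im z * im z = n * n) by (symmetry; apply Cabs_sq).
  assert (Ha : Cabs a = 1).
  { unfold a, Cabs; simpl. rewrite <- sqrt_1. f_equal.
    replace (re z / n * (re z / n) + - im z / n * (- im z / n))
      with ((re z * re z + im z * im z) / (n * n)) by (field; lra).
    rewrite Hsq. field. lra. }
  assert (HaK : inK k a).
  { unfold a, z, cplx. destruct (isC k) eqn:Hk; [now apply isC_inK|].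
    apply isC_real_inK; auto. simpl. field. lra. }
  assert (Hre : re (cplx (scal a w)) = n).
  { rewrite cplx_scal by auto. fold z. unfold a, Cmul; simpl.
    replace (re z / n * re z - - im z / n * im z) with ((re z * re z + im z * im z) / n)
      by (field; lra). rewrite Hsq. field. lra. }
  rewrite cplx_re in Hre. pose proof (proj2 Hh (scal a w)).
  rewrite norm_scal, Ha in H by auto. lra.
Qed.

Lemma cplx_unit x0 : norm x0 = 1 -> h x0 = 1 -> cplx x0 = RtoC 1.
Proof.
  intros Hn Hh1. rewrite (Cx_eta (cplx x0)). unfold RtoC. rewrite cplx_re, Hh1. f_equal.
  apply Cabs_le_re_im0. rewrite cplx_re, Hh1, <- Hn. apply cplx_bound.
Qed.

Lemma inD_scaled x0 s : norm x0 = 1 -> h x0 = 1 -> 0 < s ->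
  inD (sc s x0) (fun w => Cmul (RtoC s) (cplx w)).
Proof.
  intros Hn Hh1 Hs. assert (Habs : forall w, Cabs (Cmul (RtoC s) (cplx w)) = s * Cabs (cplx w))
    by (intro; rewrite Cabs_mul, Cabs_RtoC, Rabs_pos_eq; lra).
  split; [split; [|split; [|split]]|].
  - intro x. apply inK_mulR, cplx_inK.
  - intros x y. rewrite cplx_add. unfold Cmul, Cadd, RtoC; simpl. apply mkC_eq; ring.
  - intros a x Ha. rewrite cplx_scal by auto. unfold Cmul, RtoC; simpl. apply mkC_eq; ring.
  - exists s. intro x. rewrite Habs. pose proof (cplx_bound x). nra.
  - exists s. split; [split|split].
    + intros r [x [Hx ->]]. rewrite Habs. pose proof (cplx_bound x). nra.
    + intros b Hb. assert (Hx0 := Hb _ (ex_intro _ x0 (conj (Req_le _ _ Hn) eq_refl))).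
      rewrite Habs, cplx_unit, Cabs_RtoC, Rabs_R1 in Hx0 by auto. lra.
    + change (sc s x0) with (scal (RtoC s) x0). rewrite cplx_scal, cplx_unit by (auto; apply inK_RtoC).
      change (scal (RtoC s) x0) with (sc s x0). rewrite norm_sc, Rabs_pos_eq, Hn by lra. unfold Cmul, RtoC; simpl. apply mkC_eq; ring.
    + rewrite norm_sc, Rabs_pos_eq, Hn by lra. ring.
Qed.

End Complexify.

Section DualFacts.
Context {k : field_kind} {X : Banach k}.

Lemma dual_sc (f : X -> Cx) r x : is_dual f -> f (sc r x) = Cmul (RtoC r) (f x).
Proof. intros [_ [_ [H _]]]. apply H, inK_RtoC. Qed.

Lemma dual_bound (f : X -> Cx) w : inSXs f -> Cabs (f w) <= norm w.
Proof.
  intros [Hd [Hub _]]. destruct (norm_nonneg w) as [Hn|H0].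
  - set (n := norm w) in *.
    assert (Hw : w = sc n (sc (/ n) w)) by (rewrite sc_mul, Rinv_r, sc_1 by lra; auto).
    rewrite Hw, dual_sc, Cabs_mul, Cabs_RtoC, Rabs_pos_eq by (auto; lra).
    assert (Cabs (f (sc (/ n) w)) <= 1).
    { apply Hub. eexists; split; [|reflexivity]. rewrite norm_sc, Rabs_pos_eq.
      - fold n. rewrite Rinv_l; lra.
      - left. now apply Rinv_0_lt_compat. }
    nra.
  - symmetry in H0. apply norm_eq0 in H0 as ->.
    rewrite <- (sc_0 (vzero X)), dual_sc, Cabs_mul, Cabs_RtoC, Rabs_R0 by auto.
    pose proof (norm_nonneg (sc 0 (vzero X))). lra.
Qed.

Definition psiF (f : X -> Cx) (a : Cx) (w : X) : R := re (Cmul (conjC a) (f w)).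

Lemma psiF_rdual1 (f : X -> Cx) a : inSXs f -> Cabs a = 1 -> rdual1 (psiF f a).
Proof.
  intros Hf Ha. destruct Hf as [Hd Hn]. split; [split|].
  - intros x y. unfold psiF. rewrite (proj1 (proj2 Hd)). unfold Cmul, Cadd, conjC; simpl. ring.
  - intros r x. unfold psiF. rewrite dual_sc by auto. unfold Cmul, conjC, RtoC; simpl. ring.
  - intro w. unfold psiF. eapply Rle_trans; [apply re_le_Cabs'|].
    rewrite Cabs_mul, Cabs_conj, Ha, Rmult_1_l. now apply dual_bound.
Qed.

Lemma psiF_rot (f : X -> Cx) a x : is_dual f -> inT k a -> psiF f a (scal a x) = re (f x).
Proof.
  intros [_ [_ [H _]]] [Hk Ha]. unfold psiF. rewrite H by auto.
  pose proof (Cabs_sq a) as Hsq. rewrite Ha in Hsq. unfold Cmul, conjC; simpl.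
  transitivity ((re a * re a + im a * im a) * re (f x)); [ring|]. rewrite <- Hsq. ring.
Qed.

End DualFacts.
(** ** The Bishop–Phelps maximal point.  Greedily climbing in [psi] produces a
   Cauchy sequence (a step of the order moves by at most [kk] times the gain of [psi]);
   its limit is a maximal element above any starting point [z0]. *)
Section BishopPhelps.
Context {k : field_kind} {X : Banach k}.
Variable psi : X -> R.
Hypothesis Hpsi : rdual1 psi.
Variable kk : R.
Hypothesis Hkk : 0 < kk.

Definition bp_cone (c : X) : Prop := norm c <= kk * psi c.
Definition bp_le (a b : X) : Prop := bp_cone (vsub b a).

Lemma bp_le_refl a : bp_le a a.
Proof. unfold bp_le, bp_cone. rewrite vsub_self, norm_zero, (rlinear_0 psi) by exact (proj1 Hpsi). lra. Qed.

Lemma bp_le_trans a b c : bp_le a b -> bp_le b c -> bp_le a c.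
Proof.
  unfold bp_le, bp_cone. rewrite !(rlinear_sub psi) by exact (proj1 Hpsi). pose proof (norm_tri_sub c b a). nra.
Qed.

Lemma bp_le_psi a b : bp_le a b -> psi a <= psi b.
Proof.
  unfold bp_le, bp_cone. rewrite (rlinear_sub psi) by exact (proj1 Hpsi). pose proof (norm_nonneg (vsub b a)). nra.
Qed.

Definition above (x y : X) : Prop := norm y <= 1 /\ bp_le x y.

Lemma greedy_step_ex (n : nat) (x : X) : exists y, norm x <= 1 ->
  above x y /\ forall z, above x z -> psi z <= psi y + / INR (S n).
Proof.
  destruct (Rle_dec (norm x) 1) as [Hx|Hx]; [|exists x; intro; contradiction].
  destruct (completeness (fun r => exists z, above x z /\ r = psi z)) as [s [Hs1 Hs2]].
  { exists 1. intros r [z [[Hz _] ->]]. pose proof (proj2 Hpsi z). lra. }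
  { exists (psi x), x. split; auto. split; auto. apply bp_le_refl. }
  assert (Hpos : 0 < / INR (S n)) by (apply Rinv_0_lt_compat, lt_0_INR; lia).
  destruct (classic (exists z, above x z /\ s - / INR (S n) < psi z)) as [[z [Hz Hz']]|Hno].
  - exists z. intros _. split; auto. intros z' Hz''.
    assert (psi z' <= s) by (apply Hs1; eauto). lra.
  - exfalso. assert (s <= s - / INR (S n)); [|lra].
    apply Hs2. intros r [z [Hz ->]]. apply Rnot_lt_le. intro. apply Hno. eauto.
Qed.

Definition greedy_step (n : nat) (x : X) : X :=
  proj1_sig (constructive_indefinite_description _ (greedy_step_ex n x)).

Lemma greedy_step_spec n x : norm x <= 1 -> above x (greedy_step n x) /\
  forall z, above x z -> psi z <= psi (greedy_step n x) + / INR (S n).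
Proof. apply (proj2_sig (constructive_indefinite_description _ (greedy_step_ex n x))). Qed.

Variable z0 : X.
Hypothesis Hz0 : norm z0 <= 1.

Fixpoint climb (n : nat) : X := match n with O => z0 | S n => greedy_step n (climb n) end.

Lemma climb_ball n : norm (climb n) <= 1.
Proof. induction n; simpl; auto. apply (greedy_step_spec n _ IHn). Qed.

Lemma climb_mono n m : (n <= m)%nat -> bp_le (climb n) (climb m).
Proof.
  induction 1; [apply bp_le_refl|]. eapply bp_le_trans; eauto.
  simpl. apply (greedy_step_spec m _ (climb_ball m)).
Qed.

Lemma climb_almost_max n z : above (climb (S n)) z -> psi z <= psi (climb (S n)) + / INR (S n).
Proof.
  intros [Hz Hp]. simpl. apply (greedy_step_spec n _ (climb_ball n)). split; auto.
  eapply bp_le_trans; [|apply Hp]. apply (greedy_step_spec n _ (climb_ball n)).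
Qed.

Lemma climb_step_bound n m : (1 <= n)%nat -> (n <= m)%nat ->
  norm (vsub (climb m) (climb n)) <= kk / INR n.
Proof.
  intros H1 H2. destruct n as [|j]; [lia|].
  pose proof (climb_mono _ _ H2) as Hp. unfold bp_le, bp_cone in Hp. rewrite (rlinear_sub psi) in Hp by exact (proj1 Hpsi).
  assert (psi (climb m) <= psi (climb (S j)) + / INR (S j)).
  { apply climb_almost_max. split; [apply climb_ball|now apply climb_mono]. }
  unfold Rdiv. nra.
Qed.

Lemma climb_converges : exists L, forall eps, 0 < eps ->
  exists N, forall n, (N <= n)%nat -> norm (vsub (climb n) L) < eps.
Proof.
  apply complete. intros eps He.
  destruct (archimed_cor1 (eps / kk)) as [N [HN1 HN2]]; [now apply Rdiv_lt_0_compat|].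
  exists N. intros n m Hn Hm.
  assert (HNp : 0 < INR N) by (apply lt_0_INR; lia).
  assert (Hsmall : forall j, (N <= j)%nat -> kk / INR j < eps).
  { intros j Hj. apply (Rle_lt_trans _ (kk / INR N)).
    - unfold Rdiv. apply Rmult_le_compat_l; [lra|]. apply Rinv_le_contravar; auto. now apply le_INR.
    - apply (Rmult_lt_compat_l kk) in HN1; auto. unfold Rdiv in *.
      replace (kk * (eps * / kk)) with eps in HN1 by (field; lra). lra. }
  change (norm (vsub (climb n) (climb m)) < eps).
  destruct (Nat.le_ge_cases n m) as [Hnm|Hnm].
  - rewrite norm_sub_sym. pose proof (climb_step_bound n m ltac:(lia) Hnm). pose proof (Hsmall n Hn). lra.
  - pose proof (climb_step_bound m n ltac:(lia) Hnm). pose proof (Hsmall m Hm). lra.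
Qed.

Theorem bishop_phelps : exists x0, above z0 x0 /\
  forall y, above x0 y -> y = x0.
Proof.
  destruct climb_converges as [L HL].
  assert (Hclose : forall e, 0 < e -> exists m, (0 < m)%nat /\ norm (vsub (climb m) L) < e).
  { intros e He. destruct (HL e He) as [N HN]. exists (S N). split; [lia|]. apply HN. lia. }
  assert (HLb : norm L <= 1).
  { apply Rnot_lt_le. intro Hgt. destruct (Hclose (norm L - 1)) as [m [_ Hm]]; [lra|].
    pose proof (norm_tri_sub L (climb m) (vzero X)). rewrite !vsub_0, norm_sub_sym in H.
    pose proof (climb_ball m). lra. }
  assert (HLp : forall n, bp_le (climb n) L).
  { intro n. unfold bp_le, bp_cone. rewrite (rlinear_sub psi) by exact (proj1 Hpsi).
    apply Rnot_lt_le. intro Hgt.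
    set (e := norm (vsub L (climb n)) - kk * (psi L - psi (climb n))).
    destruct (HL (e / (1 + kk))) as [N HN]; [apply Rdiv_lt_0_compat; unfold e; lra|].
    set (m := Nat.max n N). pose proof (HN m ltac:(lia)) as Hm.
    pose proof (climb_mono n m ltac:(lia)) as Hp. unfold bp_le, bp_cone in Hp.
    pose proof (norm_tri_sub L (climb m) (climb n)) as Htri.
    rewrite (norm_sub_sym L (climb m)) in Htri.
    pose proof (proj2 Hpsi (vsub (climb m) L)).
    rewrite !(rlinear_sub psi) in Hp, H by exact (proj1 Hpsi).
    assert ((1 + kk) * (e / (1 + kk)) = e) by (field; lra). unfold e in *. nra. }
  exists L. split; [split; [auto|apply (HLp 0%nat)]|].
  intros y [Hy Hpy].
  assert (Hpsi_y : psi y - psi L <= 0).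
  { apply Rnot_lt_le. intro Hgt. destruct (archimed_cor1 (psi y - psi L)) as [[|j] [HN1 HN2]]; [lra|lia|].
    assert (psi y <= psi (climb (S j)) + / INR (S j)).
    { apply climb_almost_max. split; auto. eapply bp_le_trans; [apply HLp|auto]. }
    pose proof (bp_le_psi _ _ (HLp (S j))). lra. }
  unfold bp_le, bp_cone in Hpy. rewrite (rlinear_sub psi) in Hpy by exact (proj1 Hpsi). apply vsub_eq0, norm_eq0.
  pose proof (norm_nonneg (vsub y L)). nra.
Qed.

End BishopPhelps.
(** ** The Bishop–Phelps–Bollobás theorem.
   If [psi] (norm at most one) nearly attains 1 at [z0] in the ball, then near [z0] there
   is a unit vector [x0] and a functional [h] of norm at most one with [h x0 = 1] and
   [h] uniformly close to [psi].  [x0] is the Bishop–Phelps maximal point above [z0];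
   [h] is a support functional at [x0] that is nonnegative on the Bishop–Phelps cone,
   and positivity on that thin cone around [x0] forces [h] close to [psi]. *)
Section BPB.
Context {k : field_kind} {X : Banach k}.
Variable psi : X -> R.
Hypothesis Hpsi : rdual1 psi.
Variable kk : R.
Hypothesis Hkk : 4 <= kk.

Let Hkk0 : 0 < kk. Proof. lra. Qed.

Lemma bp_maximal_unit x0 z : norm x0 <= 1 -> (forall y, above psi kk x0 y -> y = x0) ->
  norm z <= 1 -> 1 <= kk * psi z -> norm x0 = 1.
Proof.
  intros Hx0 Hmax Hz Hpz. apply Rle_antisym; auto. apply Rnot_lt_le. intro Hlt.
  set (t := 1 - norm x0). set (y := vadd x0 (sc t z)).
  assert (Hyx : vsub y x0 = sc t z) by apply vsub_addl.
  assert (Hy : above psi kk x0 y).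
  { split.
    - pose proof (norm_triangle x0 (sc t z)). rewrite norm_sc, Rabs_pos_eq in H by (unfold t; lra).
      fold y in H. unfold t in *. nra.
    - unfold bp_le, bp_cone. rewrite Hyx, norm_sc, (rl_sc _ (proj1 Hpsi)), Rabs_pos_eq by (unfold t; lra).
      unfold t in *. nra. }
  assert (Ht : sc t z = vzero X) by (rewrite <- Hyx, (Hmax y Hy); apply vsub_self).
  apply (f_equal norm) in Ht. rewrite norm_sc, norm_zero, Rabs_pos_eq in Ht by (unfold t; lra).
  assert (0 < norm z) by (pose proof (proj2 Hpsi z); nra). unfold t in *. nra.
Qed.

(** At a maximal unit point there is a support functional nonnegative on the cone:
   Hahn–Banach for [p w = inf_{c in cone} ||w + c||], which equals 1 at [x0]. *)
Lemma bp_cone_support x0 : norm x0 = 1 -> (forall y, above psi kk x0 y -> y = x0) ->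
  exists h, rdual1 h /\ h x0 = 1 /\ forall c, bp_cone psi kk c -> 0 <= h c.
Proof.
  intros Hn1 Hmax.
  assert (C0 : bp_cone psi kk (vzero X))
    by (unfold bp_cone; rewrite norm_zero, (rlinear_0 psi) by exact (proj1 Hpsi); lra).
  assert (Cadd : forall a b, bp_cone psi kk a -> bp_cone psi kk b -> bp_cone psi kk (vadd a b)).
  { unfold bp_cone. intros a b Ha Hb. rewrite (rl_add _ (proj1 Hpsi)).
    pose proof (norm_triangle a b). lra. }
  assert (Csc : forall r a, 0 <= r -> bp_cone psi kk a -> bp_cone psi kk (sc r a)).
  { unfold bp_cone. intros r a Hr Ha. rewrite norm_sc, (rl_sc _ (proj1 Hpsi)), Rabs_pos_eq by auto. nra. }
  assert (l0add : forall a b : X, bp_cone psi kk a -> bp_cone psi kk b -> 0 = 0 + 0) by (intros; ring).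
  assert (l0sc : forall r (a : X), 0 <= r -> bp_cone psi kk a -> 0 = r * 0) by (intros; ring).
  assert (l0le : forall a, bp_cone psi kk a -> 0 <= norm a) by (intros; apply norm_nonneg).
  set (p := qinf norm (bp_cone psi kk) (fun _ => 0)).
  assert (Hps : sublin p) by now apply qinf_sublin; [apply norm_sublin| | | | | |].
  assert (Hpx : 1 <= p x0).
  { apply (proj2 (qinf_spec norm (bp_cone psi kk) (fun _ => 0) norm_sublin C0 l0le x0)).
    intros e [c [Hc ->]]. apply Rnot_lt_le. intro Hn.
    assert (Hy : above psi kk x0 (vadd x0 c)) by (split; [lra|unfold bp_le; now rewrite vsub_addl]).
    rewrite (Hmax _ Hy) in Hn. lra. }
  destruct (hahn_banach p x0 Hps) as [h [Hh [hp hx0]]].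
  assert (Hple : forall x, p x <= norm x) by (intro; apply qinf_lep; auto; apply norm_sublin).
  exists h. split; [split; auto; intro x; specialize (hp x); specialize (Hple x); lra|].
  split; [specialize (Hple x0); lra|].
  intros c Hc. pose proof (hp (vopp c)).
  pose proof (qinf_opp norm (bp_cone psi kk) (fun _ => 0) norm_sublin C0 l0le c Hc).
  rewrite (rlinear_opp h) in H by auto. fold p in H0. lra.
Qed.

(** Nonnegativity on the cone bounds [h] on the kernel of [psi]: for [psi w = 0],
   both [t x0 +- w] lie in the cone when [t = ||w|| / (kk psi x0 - 1)]. *)
Lemma cone_support_kernel h x0 w : rlinear h -> h x0 = 1 -> norm x0 = 1 ->
  (forall c, bp_cone psi kk c -> 0 <= h c) -> 1 < kk * psi x0 -> psi w = 0 ->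
  Rabs (h w) <= norm w / (kk * psi x0 - 1).
Proof.
  intros Hh Hh1 Hn1 Hpos Hb Hw. set (t := norm w / (kk * psi x0 - 1)).
  assert (Ht0 : 0 <= t) by (apply Rdiv_nonneg; [apply norm_nonneg|lra]).
  assert (Htkey : norm w + t = kk * (t * psi x0)) by (unfold t; field; lra).
  assert (Hcone : forall v, norm v = norm w -> psi v = 0 -> 0 <= h v + t).
  { intros v Hv Hpv. assert (Hc : bp_cone psi kk (vadd v (sc t x0))).
    { unfold bp_cone. rewrite (rl_add _ (proj1 Hpsi)), (rl_sc _ (proj1 Hpsi)), Hpv.
      pose proof (norm_triangle v (sc t x0)). rewrite norm_sc, Hn1, Rabs_pos_eq in H by auto. lra. }
    apply Hpos in Hc. now rewrite (rl_add _ Hh), (rl_sc _ Hh), Hh1, Rmult_1_r in Hc. }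
  pose proof (Hcone w eq_refl Hw). pose proof (Hcone (vopp w) (norm_opp w)).
  rewrite !rlinear_opp, Hw in H0 by (auto; exact (proj1 Hpsi)).
  unfold Rabs; destruct Rcase_abs; lra.
Qed.

(** Closeness of the cone-positive support functional to [psi]: decompose
   [w = w' + (psi w / b) x0] with [psi w' = 0], [b = psi x0 > 1 - eps]. *)
Lemma cone_support_close h x0 eps : rdual1 h -> h x0 = 1 -> norm x0 = 1 ->
  (forall c, bp_cone psi kk c -> 0 <= h c) -> 0 < eps <= 1/4 -> 1 - eps < psi x0 ->
  forall w, Rabs (h w - psi w) <= (6 / (kk - 2) + 2 * eps) * norm w.
Proof.
  intros Hh Hh1 Hn1 Hpos He Hbx w. set (b := psi x0) in *. set (N := norm w). set (pw := psi w).
  assert (Hb1 : b <= 1) by (unfold b; rewrite <- Hn1; apply Hpsi).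
  assert (HN : 0 <= N) by apply norm_nonneg.
  assert (HpwN : Rabs pw <= N) by now apply rdual1_abs.
  set (w' := vsub w (sc (pw / b) x0)).
  assert (Hpw' : psi w' = 0).
  { unfold w'. rewrite (rlinear_sub psi), (rl_sc _ (proj1 Hpsi)) by exact (proj1 Hpsi).
    fold b pw. field. lra. }
  assert (Hhw' : h w' = h w - pw / b)
    by (unfold w'; rewrite (rlinear_sub h), (rl_sc _ (proj1 Hh)), Hh1 by exact (proj1 Hh); ring).
  assert (Hnw' : norm w' <= N + N / b).
  { unfold w'. pose proof (norm_sub_le w (sc (pw / b) x0)). rewrite norm_sc, Hn1 in H.
    unfold Rdiv in *. rewrite Rabs_mult, (Rabs_pos_eq (/ b)) in H by (left; apply Rinv_0_lt_compat; lra).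
    assert (Rabs pw * / b <= N * / b) by (apply Rmult_le_compat_r; [left; apply Rinv_0_lt_compat; lra|auto]).
    fold N in H. lra. }
  pose proof (cone_support_kernel h x0 w' (proj1 Hh) Hh1 Hn1 Hpos ltac:(fold b; nra) Hpw') as Hker.
  fold b in Hker. rewrite Hhw' in Hker.
  assert (Hden : 2 <= kk * b - 1) by nra.
  assert (Hmain : norm w' / (kk * b - 1) <= 6 / (kk - 2) * N).
  { apply (Rmult_le_reg_l ((kk * b - 1) * (kk - 2))); [nra|].
    replace ((kk * b - 1) * (kk - 2) * (norm w' / (kk * b - 1))) with ((kk - 2) * norm w') by (field; lra).
    replace ((kk * b - 1) * (kk - 2) * (6 / (kk - 2) * N)) with ((kk * b - 1) * (6 * N)) by (field; lra).
    assert (N / b <= 4 / 3 * N) by (apply (Rmult_le_reg_l b); [lra|]; field_simplify; nra).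
    assert (norm w' <= 7 / 3 * N) by lra. assert (kk - 2 <= 2 * (kk * b - 1)) by nra.
    pose proof (norm_nonneg w'). nra. }
  assert (Hrest : Rabs (pw / b - pw) <= 2 * eps * N).
  { replace (pw / b - pw) with (pw * ((1 - b) / b)) by (field; lra).
    rewrite Rabs_mult, (Rabs_pos_eq ((1 - b) / b)) by (apply Rdiv_nonneg; lra).
    assert ((1 - b) / b <= 2 * eps) by (apply (Rmult_le_reg_l b); [lra|]; field_simplify; nra).
    pose proof (Rabs_pos pw). nra. }
  replace (h w - pw) with ((h w - pw / b) + (pw / b - pw)) by ring.
  eapply Rle_trans; [apply Rabs_triang|]. fold N. lra.
Qed.

Theorem bishop_phelps_bollobas eps z0 : 0 < eps <= 1/4 -> norm z0 <= 1 -> 1 - eps < psi z0 ->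
  exists x0 h, norm x0 = 1 /\ norm (vsub x0 z0) <= kk * eps /\ rdual1 h /\ h x0 = 1 /\
    forall w, Rabs (h w - psi w) <= (6 / (kk - 2) + 2 * eps) * norm w.
Proof.
  intros He Hz0 Hpz.
  destruct (bishop_phelps psi Hpsi kk Hkk0 z0 Hz0) as [x0 [[Hx0b Hzx] Hmax]].
  pose proof (bp_le_psi psi Hpsi kk Hkk0 _ _ Hzx) as Hpzx.
  assert (Hn1 : norm x0 = 1) by (apply (bp_maximal_unit x0 z0); auto; nra).
  assert (Hpx0 : psi x0 <= 1) by (rewrite <- Hn1; apply Hpsi).
  destruct (bp_cone_support x0 Hn1 Hmax) as [h [Hh [Hh1 Hpos]]].
  exists x0, h. split; [auto|split; [|split; [auto|split; [auto|]]]].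
  - unfold bp_le, bp_cone in Hzx. rewrite (rlinear_sub psi) in Hzx by exact (proj1 Hpsi). nra.
  - apply (cone_support_close h x0 eps); auto. lra.
Qed.

End BPB.
Section LipschitzIndex.
Context {k : field_kind} {X : Banach k}.

Definition omega_ratio (T : X -> X) (x y : X) (f : X -> Cx) : R :=
  Cabs (f (vsub (T x) (T y))) / (norm (vsub x y)) ^ 2.

Lemma norm_scal_T (a : Cx) (v : X) : inT k a -> norm (scal a v) = norm v.
Proof. intros [Hk Ha]. rewrite norm_scal, Ha by auto. ring. Qed.

Lemma inD_ratio (d : X) (f : X -> Cx) : d <> vzero X -> inD d f -> Cabs (f d) / (norm d) ^ 2 = 1.
Proof.
  intros Hd [_ [c [_ [Hf Hc]]]]. rewrite Hf, Cabs_RtoC, Hc.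
  pose proof (norm_pos d Hd). rewrite Rabs_pos_eq by nra. field. lra.
Qed.

Lemma lip1_contraction (T : X -> X) : lip_norm T 1 ->
  forall x y, norm (vsub (T x) (T y)) <= norm (vsub x y).
Proof.
  intros [Hub _] x y. destruct (classic (x = y)) as [->|Hxy]; [rewrite !vsub_self; lra|].
  pose proof (norm_pos _ (vsub_neq0 _ _ Hxy)).
  assert (norm (vsub (T x) (T y)) / norm (vsub x y) <= 1) by (apply Hub; now exists x, y).
  apply (Rmult_le_compat_l (norm (vsub x y))) in H0; [|lra].
  field_simplify in H0; lra.
Qed.

Lemma lip1_near_extremal (T : X -> X) eps : lip_norm T 1 -> 0 < eps ->
  exists u v, u <> v /\ (1 - eps) * norm (vsub u v) < norm (vsub (T u) (T v)).
Proof.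
  intros [_ Hlub] He. apply NNPP. intro Hno. assert (1 <= 1 - eps); [|lra].
  apply Hlub. intros r [u [v [Huv ->]]]. apply Rnot_lt_le. intro Hgt. apply Hno.
  exists u, v. split; auto. pose proof (norm_pos _ (vsub_neq0 _ _ Huv)).
  apply (Rmult_lt_compat_l (norm (vsub u v))) in Hgt; auto. field_simplify in Hgt; lra.
Qed.

(** Segment lemma: if along the segment from [a] to [a + s z0] ([z0] nearly norming
   [psi]) the functional [psi . al] sees [T] increase by [s (1 - eta)], then the support
   data of Bishop–Phelps–Bollobás at a nearby segment give a ratio close to [1 - eta]. *)
Lemma segment_ratio (T : X -> X) (Lip : forall x y, norm (vsub (T x) (T y)) <= norm (vsub x y))
  (psi : X -> R) (Hpsi : rdual1 psi) (al : Cx) (Hal : inT k al)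
  (kk eps : R) (Hkk : 4 <= kk) (He : 0 < eps <= 1/4)
  (z0 : X) (Hz0 : norm z0 <= 1) (Hpz : 1 - eps < psi z0)
  (a : X) (s : R) (Hs : 0 < s) (eta : R)
  (Hseg : s * (1 - eta) <= psi (scal al (vsub (T (vadd a (sc s z0))) (T a)))) :
  exists x y f, x <> y /\ inD (vsub x y) f /\
    1 - eta - kk * eps - (6 / (kk - 2) + 2 * eps) <= omega_ratio T x y f.
Proof.
  destruct (bishop_phelps_bollobas psi Hpsi kk Hkk eps z0 He Hz0 Hpz)
    as [x0 [h [Hn1 [Hdist [Hh [Hh1 Hclose]]]]]].
  set (b := vadd a (sc s z0)) in *. set (x := vadd a (sc s x0)).
  set (v := vsub (T x) (T a)). set (c := 6 / (kk - 2) + 2 * eps).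
  assert (Hc : 0 <= c) by (unfold c; assert (0 < 6 / (kk - 2)) by (apply Rdiv_lt_0_compat; lra); lra).
  assert (Hxa : vsub x a = sc s x0) by apply vsub_addl.
  assert (Hnxa : norm (vsub x a) = s) by (rewrite Hxa, norm_sc, Hn1, Rabs_pos_eq; lra).
  assert (Hnv : norm v <= s) by (rewrite <- Hnxa; apply Lip).
  (* [psi (al v)] is still large: [x] is within [s kk eps] of [b] *)
  assert (Hpsi_v : s * (1 - eta) - s * (kk * eps) <= psi (scal al v)).
  { unfold v. rewrite (vsub_chain (T a) (T b) (T x)), scal_addv, (rl_add _ (proj1 Hpsi)) by apply Hal.
    pose proof (rdual1_ge psi (scal al (vsub (T x) (T b))) Hpsi). rewrite norm_scal_T in H by auto.
    assert (norm (vsub x b) <= s * (kk * eps)).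
    { unfold x, b. rewrite vsub_addcancel, <- sc_sub, norm_sc, Rabs_pos_eq by lra.
      apply Rmult_le_compat_l; lra. }
    pose proof (Lip x b). lra. }
  (* the complexified [h] sees at least [Re h (al v) >= psi (al v) - c ||v||] *)
  assert (Hcplx : psi (scal al v) - c * s <= Cabs (cplx h v)).
  { assert (h (scal al v) <= Cabs (cplx h v)).
    { rewrite <- (Rmult_1_l (Cabs (cplx h v))), <- (proj2 Hal), <- Cabs_mul.
      rewrite <- cplx_scal, <- (cplx_re h (scal al v)) by (auto; apply Hal). apply re_le_Cabs'. }
    pose proof (Hclose (scal al v)). rewrite norm_scal_T in H0 by auto.
    pose proof (Rle_abs (psi (scal al v) - h (scal al v))). rewrite Rabs_minus_sym in H1.
    assert (c * norm v <= c * s) by (apply Rmult_le_compat_l; auto). fold c in H0. lra. }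
  exists x, a, (fun w => Cmul (RtoC s) (cplx h w)). split; [|split].
  - intro Heq. rewrite Heq, vsub_self, norm_zero in Hnxa. lra.
  - rewrite Hxa. now apply inD_scaled.
  - unfold omega_ratio. fold v. rewrite Hnxa, Cabs_mul, Cabs_RtoC, Rabs_pos_eq by lra.
    apply (Rmult_le_reg_l (s ^ 2)); [nra|]. field_simplify; [|lra]. fold c. nra.
Qed.

End LipschitzIndex.
Section JoinLush.
Context {k : field_kind} {X : Banach k}.
Variable T : X -> X.
Hypothesis Lip : forall x y, norm (vsub (T x) (T y)) <= norm (vsub x y).

(** Polygon estimate: if the path [v -> p1 -> p2] with sides [r lam A1], [r (1-lam) A2]
   ends within [r eps] of [u], and a functional [g] of norm at most one sees [T] increase
   by [r (1 - 2 eps)] from [v] to [u], then the longer side, of length [l >= r/2],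
   carries an increase of at least [l (1 - 6 eps)]. *)
Lemma polygon_long_side (g : X -> R) (Hg : rdual1 g) (u v A1 A2 : X) (r lam eps : R) :
  0 < r -> 0 <= lam <= 1 -> norm A1 <= 1 -> norm A2 <= 1 ->
  let p1 := vadd v (sc (r * lam) A1) in let p2 := vadd p1 (sc (r * (1 - lam)) A2) in
  norm (vsub u p2) < r * eps -> r * (1 - 2 * eps) <= g (vsub (T u) (T v)) ->
  (1/2 <= lam /\ r * lam * (1 - 6 * eps) <= g (vsub (T p1) (T v))) \/
  (lam < 1/2 /\ r * (1 - lam) * (1 - 6 * eps) <= g (vsub (T p2) (T p1))).
Proof.
  intros Hr Hlam HA1 HA2 p1 p2 Hp2u Hinc.
  assert (Hside : forall q (t : R) A, 0 <= t -> norm A <= 1 ->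
            g (vsub (T (vadd q (sc t A))) (T q)) <= t).
  { intros q t A Ht HA. eapply Rle_trans; [apply Hg|]. eapply Rle_trans; [apply Lip|].
    rewrite vsub_addl, norm_sc, Rabs_pos_eq by auto. nra. }
  assert (B1 : g (vsub (T u) (T p2)) <= r * eps).
  { eapply Rle_trans; [apply Hg|]. pose proof (Lip u p2). lra. }
  assert (B2 : g (vsub (T p1) (T v)) <= r * lam) by (apply Hside; auto; nra).
  assert (B3 : g (vsub (T p2) (T p1)) <= r * (1 - lam)) by (apply Hside; auto; nra).
  assert (Hchain : g (vsub (T u) (T v)) =
            g (vsub (T u) (T p2)) + g (vsub (T p2) (T p1)) + g (vsub (T p1) (T v))).
  { rewrite (vsub_chain (T v) (T p2) (T u)), (vsub_chain (T v) (T p1) (T p2)).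
    rewrite !(rl_add _ (proj1 Hg)). ring. }
  destruct (Rle_lt_dec (1/2) lam); [left|right]; split; auto; nra.
Qed.

Lemma join_lush_segment (eps : R) (He : 0 < eps <= 1/4) (u v : X) :
  join_lush X -> u <> v -> (1 - eps) * norm (vsub u v) < norm (vsub (T u) (T v)) ->
  exists psi al z0 a s, rdual1 psi /\ inT k al /\ norm z0 <= 1 /\ 1 - eps < psi z0 /\
    0 < s /\ s * (1 - 6 * eps) <= psi (scal al (vsub (T (vadd a (sc s z0))) (T a))).
Proof.
  intros Hjl Huv Hrho. set (r := norm (vsub u v)) in *. set (rho := norm (vsub (T u) (T v))) in *.
  assert (Hr : 0 < r) by (apply norm_pos, vsub_neq0, Huv).
  assert (Hrho0 : 0 < rho) by nra.
  set (xx := sc (/ r) (vsub u v)). set (yy := sc (/ rho) (vsub (T u) (T v))).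
  assert (Hunit : forall (c : R) (w : X), 0 < c -> norm w = c -> inSX (sc (/ c) w)).
  { intros c w Hc Hw. unfold inSX. rewrite norm_sc, Rabs_pos_eq, Hw by (left; now apply Rinv_0_lt_compat).
    field. lra. }
  destruct (Hjl xx yy (Hunit r _ Hr eq_refl) (Hunit rho _ Hrho0 eq_refl) eps (proj1 He))
    as [ys [Hys [[_ Hsly] [x1 [x2 [lam [a1 [a2 [[Hx1n Hx1r] [[Hx2n Hx2r] [Hlam [Ha1 [Ha2 Hnorm]]]]]]]]]]]]].
  set (g := psiF ys (RtoC 1)).
  assert (Hg : rdual1 g) by (apply psiF_rdual1; auto; now rewrite Cabs_RtoC, Rabs_R1).
  assert (Hgre : forall w, g w = re (ys w)) by (intro; unfold g, psiF, RtoC, conjC, Cmul; simpl; ring).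
  set (A1 := scal a1 x1). set (A2 := scal a2 x2).
  assert (Hu : u = vadd v (sc r xx)) by (unfold xx; rewrite sc_mul, Rinv_r, sc_1 by lra; symmetry; apply vadd_sub).
  assert (Hp2u : norm (vsub u (vadd (vadd v (sc (r * lam) A1)) (sc (r * (1 - lam)) A2))) < r * eps).
  { rewrite Hu, <- vadd_assoc, vsub_addcancel, <- !sc_mul, <- sc_addv, <- sc_sub, norm_sc, Rabs_pos_eq by lra.
    apply Rmult_lt_compat_l; auto. }
  assert (Hinc : r * (1 - 2 * eps) <= g (vsub (T u) (T v))).
  { replace (vsub (T u) (T v)) with (sc rho yy) by (unfold yy; rewrite sc_mul, Rinv_r, sc_1 by lra; auto).
    rewrite (rl_sc _ (proj1 Hg)), Hgre. nra. }
  destruct (polygon_long_side g Hg u v A1 A2 r lam eps Hr Hlam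
              ltac:(unfold A1; now rewrite norm_scal_T) ltac:(unfold A2; now rewrite norm_scal_T)
              Hp2u Hinc) as [[Hl Hside]|[Hl Hside]].
  - exists (psiF ys a1), a1, A1, v, (r * lam).
    split; [apply psiF_rdual1; auto; apply Ha1|split; [auto|split; [unfold A1; now rewrite norm_scal_T|]]].
    split; [unfold A1; rewrite psiF_rot by (auto; apply Hys); lra|split; [nra|]].
    rewrite psiF_rot, <- Hgre by (auto; apply Hys). exact Hside.
  - exists (psiF ys a2), a2, A2, (vadd v (sc (r * lam) A1)), (r * (1 - lam)).
    split; [apply psiF_rdual1; auto; apply Ha2|split; [auto|split; [unfold A2; now rewrite norm_scal_T|]]].
    split; [unfold A2; rewrite psiF_rot by (auto; apply Hys); lra|split; [nra|]].
    rewrite psiF_rot, <- Hgre by (auto; apply Hys). exact Hside.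
Qed.

End JoinLush.
(** Parameters for which the total error [6 eps + kk eps + 6/(kk-2) + 2 eps] of the
   lower-bound argument is below a prescribed [dl > 0]. *)
Lemma error_parameters dl : 0 < dl -> exists kk eps, 4 <= kk /\ 0 < eps <= 1/4 /\
  6 * eps + kk * eps + (6 / (kk - 2) + 2 * eps) < dl.
Proof.
  intro Hdl. set (kk := 4 + 12 / dl). assert (H12 : 0 < 12 / dl) by (apply Rdiv_lt_0_compat; lra).
  set (eps := Rmin (1/4) (dl / (4 * (8 + kk)))).
  assert (He : 0 < eps) by (apply Rmin_pos; [lra|apply Rdiv_lt_0_compat; unfold kk; lra]).
  exists kk, eps. split; [unfold kk; lra|split; [split; [auto|apply Rmin_l]|]].
  assert (Hk6 : 6 / (kk - 2) = dl / 2 * (6 / (dl + 6))).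
  { unfold kk. field. lra. }
  assert (6 / (dl + 6) < 1) by (apply (Rmult_lt_reg_l (dl + 6)); [lra|]; field_simplify; lra).
  assert (Heps : (8 + kk) * eps <= dl / 4).
  { assert (eps <= dl / (4 * (8 + kk))) by apply Rmin_r.
    apply (Rmult_le_compat_l (8 + kk)) in H0; [|unfold kk; lra].
    replace ((8 + kk) * (dl / (4 * (8 + kk)))) with (dl / 4) in H0 by (field; unfold kk; lra). lra. }
  nra.
Qed.

Section Bounds.
Context {k : field_kind} {X : Banach k}.

Lemma join_lush_omega_ge (T : X -> X) (w : R) : join_lush X -> lip_norm T 1 -> omega T w -> 1 <= w.
Proof.
  intros Hjl Hl [Hub _]. apply Rnot_lt_le. intro Hw.
  destruct (error_parameters (1 - w)) as [kk [eps [Hkk [He Herr]]]]; [lra|].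
  pose proof (lip1_contraction T Hl) as Lip.
  destruct (lip1_near_extremal T eps Hl (proj1 He)) as [u [v [Huv Hrho]]].
  destruct (join_lush_segment T Lip eps He u v Hjl Huv Hrho)
    as [psi [al [z0 [a [s [Hpsi [Hal [Hz0 [Hpz [Hs Hseg]]]]]]]]]].
  destruct (segment_ratio T Lip psi Hpsi al Hal kk eps Hkk He z0 Hz0 Hpz a s Hs (6 * eps) Hseg)
    as [x [y [f [Hxy [Hf Hratio]]]]].
  assert (omega_ratio T x y f <= w) by (apply Hub; exists x, y, f; auto).
  lra.
Qed.

Lemma identity_lip_omega : (exists x : X, x <> vzero X) ->
  lip_norm (fun x : X => x) 1 /\ omega (fun x : X => x) 1.
Proof.
  intros [e He]. pose proof (norm_pos e He) as Hne.
  set (e1 := sc (/ norm e) e).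
  assert (Hn1 : norm e1 = 1)
    by (unfold e1; rewrite norm_sc, Rabs_pos_eq by (left; now apply Rinv_0_lt_compat); field; lra).
  assert (He1 : e1 <> vzero X) by (intro H; rewrite H, norm_zero in Hn1; lra).
  destruct (hahn_banach norm e1 norm_sublin) as [h [Hh [hb hx0]]].
  assert (Hh1 : rdual1 h) by now split.
  pose proof (inD_scaled h Hh1 e1 1 Hn1 ltac:(lra) Rlt_0_1) as HD. rewrite sc_1 in HD.
  split; split.
  - intros r [x [y [Hxy ->]]]. pose proof (norm_pos _ (vsub_neq0 _ _ Hxy)). right. field. lra.
  - intros b Hb. apply Hb. exists e1, (vzero X). split; auto. rewrite vsub_0. field. lra.
  - intros r [x [y [f [Hxy [Hf ->]]]]]. cbv beta. rewrite inD_ratio by (auto; now apply vsub_neq0). lra.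
  - intros b Hb. apply Hb. exists e1, (vzero X), (fun w => Cmul (RtoC 1) (cplx h w)).
    rewrite vsub_0. split; auto. split; auto.
    pose proof (inD_ratio _ _ He1 HD) as HR. cbv beta in HR. lra.
Qed.

End Bounds.

Theorem mainTheorem7 (k : field_kind) (X : Banach k) :
  (exists x : X, x <> vzero X) ->
  join_lush X -> nL X 1.
Proof.
  intros Hne Hjl. split.
  - intros w [T [_ [Hl Hw]]]. exact (join_lush_omega_ge T w Hjl Hl Hw).
  - intros b Hb. apply Hb. exists (fun x => x). split; [reflexivity|].
    now apply identity_lip_omega.
Qed.
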